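(* For each $\underline y\in\mathcal F$ there exists $\underline x\in\mathcal F_0$ such that (1) $x_{j,k}\le y_{j,k}$ for all $k\in Q$ and $j\in\tilde V\setminus\{k,0\}$, and hence (2) $\sum_{j\in\tilde R}c_jx_j\le\sum_{j\in\tilde R}c_jy_j$.
   Context: Let $G=(V,E)$ be a finite undirected graph with $V=Q\cup R\cup B$ (pairwise disjoint), where $Q$ is the set of sources, $R$ the set of potential relay locations and $B$ the set of potential sink locations; let $h_{\max}$ be a positive integer and $c_s,c_r\ge0$. Form the augmented graph $\tilde G=(\tilde V,\tilde E)$ with $\tilde V=V\cup\{0\}$, where $0$ is a new vertex (virtual sink), and $\tilde E=E\cup\{\{0,b\}:b\in B\}$. Let $\tilde R=R\cup B$ with node costs $c_j=c_r$ for $j\in R$ and $c_j=c_s$ for $j\in B$. For a source $k\in Q$, a node cut for $k$ is a set $\gamma\subseteq\tilde V\setminus\{k,0\}$ whose deletion disconnects $k$ from $0$ in $\tilde G$; it is minimal if no proper subset is a node cut; $\Gamma^k$ denotes the set of minimal node cuts for $k$. A vector $\underline y=((y_{j,k})_{k\in Q,\,j\in\tilde V\setminus\{k,0\}},(y_j)_{j\in\tilde R})$ belongs to $\mathcal F$ iff: (i) $\sum_{j\in\gamma}y_{j,k}\ge1$ for all $\gamma\in\Gamma^k$, $k\in Q$; (ii) $y_j\ge y_{j,k}$ for all $j\in\tilde R$, $k\in Q$; (iii) $\sum_{j\in\tilde V\setminus\{k,0\}}y_{j,k}\le h_{\max}$ for all $k\in Q$; (iv) all $y_{j,k},y_j\in\{0,1\}$.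 For $k\in Q$ let $\mathcal P'_k$ be the set of paths in $\tilde G$ from $k$ to $0$ with at most $h_{\max}+1$ edges, and let $\mathcal U_0$ be the set of tuples $\underline g=(p_k)_{k\in Q}$ with $p_k\in\mathcal P'_k$. For $\underline g\in\mathcal U_0$ define $\underline x(\underline g)$ by $x_{j,k}=1$ if $j$ is a vertex of $p_k$ and $0$ otherwise ($k\in Q$, $j\in\tilde V\setminus\{k,0\}$), and $x_j=1$ if $x_{j,k}=1$ for some $k\in Q$ and $0$ otherwise ($j\in\tilde R$). Let $\mathcal F_0=\{\underline x(\underline g):\underline g\in\mathcal U_0\}$. *)

From HB Require Import structures.
From mathcomp Require Import all_boot all_order all_algebra.
Set Implicit Arguments. Unset Strict Implicit. Unset Printing Implicit Defensive.
Import Order.TTheory GRing.Theory Num.Theory.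

Section Defs.
Variables (T : finType) (Q Rs B : {set T}) (e : rel T) (hmax : nat).

(* Augmented vertex set V~ = option T : [None] is the virtual sink 0,
   [Some v] is the vertex v of V. *)
Definition aedge : rel (option T) := fun u v =>
  match u, v with
  | Some a, Some b => e a b
  | None, Some b => b \in B
  | Some a, None => a \in B
  | None, None => false
  end.

Definition Rt : {set T} := Rs :|: B.

Definition is_node_cut (k : T) (gam : {set option T}) : bool :=
  [&& Some k \notin gam, None \notin gam &
   ~~ connect [rel u v | [&& aedge u v, u \notin gam & v \notin gam]]
        (Some k) None].

Definition is_min_node_cut (k : T) (gam : {set option T}) : bool :=
  is_node_cut k gam &&
  [forall gam' : {set option T}, (gam' \proper gam) ==> ~~ is_node_cut k gam'].

Definition jdom (k : T) (j : option T) : bool := (j != Some k) && (j != None).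

(* The feasible set F: y_{j,k} is [yjk k j], y_j is [yj j]. *)
Definition in_F (yjk : T -> option T -> nat) (yj : T -> nat) : Prop :=
  (forall k gam, k \in Q -> is_min_node_cut k gam ->
     1 <= \sum_(j in gam) yjk k j)%N /\
  (forall j k, j \in Rt -> k \in Q -> yjk k (Some j) <= yj j)%N /\
  (forall k, k \in Q -> \sum_(j | jdom k j) yjk k j <= hmax)%N /\
  (forall k j, k \in Q -> jdom k j -> yjk k j <= 1)%N /\
  (forall j, j \in Rt -> yj j <= 1)%N.

Definition in_Pprime (k : T) (p : seq (option T)) : bool :=
  if p is v :: s then
    [&& v == Some k, path aedge v s, last v s == None, uniq p &
        (size s <= hmax.+1)%N]
  else false.

Definition in_U0 (g : T -> seq (option T)) : Prop :=
  forall k, k \in Q -> in_Pprime k (g k).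

Definition xjk_of (g : T -> seq (option T)) (k : T) (j : option T) : nat :=
  (j \in g k).
Definition xj_of (g : T -> seq (option T)) (j : T) : nat :=
  [exists k in Q, xjk_of g k (Some j) == 1%N].

Definition in_F0 (xjk : T -> option T -> nat) (xj : T -> nat) : Prop :=
  exists g, in_U0 g /\
    (forall k j, k \in Q -> jdom k j -> xjk k j = xjk_of g k j) /\
    (forall j, j \in Rt -> xj j = xj_of g j).

End Defs.

Definition cost (K : numDomainType) (T : finType) (Rs : {set T}) (cs cr : K)
  (j : T) : K := if j \in Rs then cr else cs.

(* For each source k, the vertices j with y_{j,k} = 0 cannot form a node cut:
   a minimal cut inside them would violate constraint (i). Hence k reaches the
   virtual sink through vertices of positive y_{j,k}. Shortened to a simple
   path, its interior vertices are distinct and each carries y_{j,k} >= 1, so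
   constraint (iii) bounds their number by h_max. Routing every
   source along such a path gives x <= y componentwise, and (ii) then bounds
   x_j by y_j, so the cost can only decrease. *)

From mathcomp Require Import all_boot all_order all_algebra.
Import Order.TTheory GRing.Theory Num.Theory.

Set Implicit Arguments.
Unset Strict Implicit.
Unset Printing Implicit Defensive.

Lemma path_all_target (T : Type) (r : rel T) (P : pred T) x p :
  (forall u v, r u v -> P v) -> path r x p -> all P p.
Proof.
move=> rP; elim: p x => [|v p IHp] x //= /andP[rxv pv].
by rewrite (rP _ _ rxv) (IHp _ pv).
Qed.

Lemma card_pos_le_sum (T : finType) (P : pred T) (w : T -> nat) :
  #|[pred j | P j && (0 < w j)]| <= \sum_(j | P j) w j.
Proof.
rewrite (bigID (fun j => 0 < w j)) /= -sum1_card.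
by apply: leq_trans (leq_addr _ _); apply: leq_sum => j /andP[_].
Qed.

Section SupportPath.

Variables (T : finType) (Q Rs B : {set T}) (e : rel T) (hmax : nat).
Variables (yjk : T -> option T -> nat) (yj : T -> nat).
Hypothesis yF : in_F Q Rs B e hmax yjk yj.
Variable k : T.
Hypothesis kQ : k \in Q.

Local Notation support := [pred j | jdom k j && (0 < yjk k j)].
Local Notation zero_set := [set j | jdom k j && (yjk k j == 0)].

Lemma minset_is_min_node_cut gam :
  minset (is_node_cut B e k) gam -> is_min_node_cut B e k gam.
Proof.
case/minsetP=> cut_gam min_gam; rewrite /is_min_node_cut cut_gam /=.
apply/forallP=> gam'; apply/implyP=> lt_gam'; apply/negP=> cut_gam'.
have eq_gam := min_gam _ cut_gam' (proper_sub lt_gam').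
by rewrite eq_gam properxx in lt_gam'.
Qed.

Lemma node_cut_weight_pos gam :
  is_node_cut B e k gam -> 0 < \sum_(j in gam) yjk k j.
Proof.
move=> cut_gam; have [A minA sAgam] := minset_exists cut_gam.
have [cuts_hit _] := yF.
apply: leq_trans (cuts_hit k A kQ (minset_is_min_node_cut minA)) _.
by apply: (sub_le_big leqnn (fun m n => leq_addr n m)) => j /(subsetP sAgam).
Qed.

Lemma connect_avoid_zero_set :
  connect [rel u v | [&& aedge B e u v, u \notin zero_set & v \notin zero_set]]
    (Some k) None.
Proof.
apply/negPn/negP=> no_path.
have /node_cut_weight_pos : is_node_cut B e k zero_set.
  by rewrite /is_node_cut !inE /jdom !eqxx.
by rewrite big1 // => j; rewrite inE => /andP[_ /eqP].
Qed.

Lemma size_support_path (p : seq (option T)) :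
  uniq p -> {subset p <= [predU1 None & support]} -> size p <= hmax.+1.
Proof.
move=> uniq_p sub_p; rewrite -(card_uniqP uniq_p).
apply: leq_trans (subset_leq_card (introT subsetP sub_p)) _.
rewrite cardU1 -add1n; apply: leq_add (leq_b1 _) _.
apply: leq_trans (card_pos_le_sum (jdom k) (yjk k)) _.
by have [_ [_ [hop_bound _]]] := yF; apply: hop_bound.
Qed.

Lemma exists_support_path :
  exists p, in_Pprime B e hmax k p && all (fun j => jdom k j ==> (0 < yjk k j)) p.
Proof.
have /connectP[p0 path_p0] := connect_avoid_zero_set.
case: (shortenP path_p0) => p path_p uniq_kp _ last_p.
have avoid_p : all (fun j => j \notin zero_set) p.
  by apply: path_all_target path_p => u v /and3P[].
have pos_p : all (fun j => jdom k j ==> (0 < yjk k j)) p.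
  by apply: sub_all avoid_p => j; rewrite inE negb_and -lt0n; case: (jdom k j).
case/andP: uniq_kp => kNp uniq_p.
exists (Some k :: p); rewrite /= {1}/jdom eqxx pos_p -last_p eqxx kNp /= andbT.
apply/and3P; split=> //; first by apply: sub_path path_p => u v /and3P[].
apply: size_support_path uniq_p _ => j pj; rewrite !inE.
have [//|jN] := eqVneq j None.
have jk : jdom k j by rewrite /jdom jN andbT; apply: contraNneq kNp => <-.
by rewrite jk (implyP (allP pos_p j pj)).
Qed.

End SupportPath.

Lemma jdom_Rt (T : finType) (Q Rs B : {set T}) k j :
  [disjoint Q & Rs] -> [disjoint Q & B] -> k \in Q -> j \in Rt Rs B ->
  jdom k (Some j).
Proof.
move=> dQR dQB kQ; rewrite /jdom andbT inE; apply: contraL => /eqP[->].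
by rewrite (disjointFr dQR kQ) (disjointFr dQB kQ).
Qed.

Lemma cost_ge0 (K : numDomainType) (T : finType) (Rs : {set T}) (cs cr : K) j :
  (0 <= cs)%R -> (0 <= cr)%R -> (0 <= cost Rs cs cr j)%R.
Proof. by rewrite /cost; case: ifP. Qed.

Theorem lemma3 (K : realFieldType) (T : finType) (Q Rs B : {set T})
  (e : rel T) (hmax : nat) (cs cr : K)
  (hQR : [disjoint Q & Rs]) (hQB : [disjoint Q & B]) (hRB : [disjoint Rs & B])
  (hcover : Q :|: Rs :|: B = [set: T])
  (hsym : symmetric e) (hh : (0 < hmax)%N) (hcs : (0 <= cs)%R) (hcr : (0 <= cr)%R)
  (yjk : T -> option T -> nat) (yj : T -> nat) :
  in_F Q Rs B e hmax yjk yj ->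
  exists (xjk : T -> option T -> nat) (xj : T -> nat),
    [/\ in_F0 Q Rs B e hmax xjk xj,
        (forall k j, k \in Q -> jdom k j -> (xjk k j <= yjk k j)%N) &
        (\sum_(j in Rt Rs B) cost Rs cs cr j * (xj j)%:R
           <= \sum_(j in Rt Rs B) cost Rs cs cr j * (yj j)%:R)%R].
Proof.
move=> yF; have /fin_all_exists[g gP] : forall k, exists p : seq (option T),
    k \in Q -> in_Pprime B e hmax k p && all (fun j => jdom k j ==> (0 < yjk k j)) p.
  move=> k; case: (boolP (k \in Q)) => [kQ|]; last by exists [::].
  by have [p ?] := exists_support_path yF kQ; exists p.
have le_xy k j : k \in Q -> jdom k j -> xjk_of g k j <= yjk k j.
  move=> kQ jk; rewrite /xjk_of; case jg: (j \in g k) => //=.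
  by have /andP[_ /allP/(_ j jg)] := gP k kQ; rewrite jk.
exists (xjk_of g), (xj_of Q g); split=> //.
  by exists g; split=> // k kQ; case/andP: (gP k kQ).
apply: ler_sum => j jRt; apply: ler_wpM2l; first exact: cost_ge0.
rewrite ler_nat /xj_of; case: existsP => [[k /andP[kQ /eqP x1]]|] //=.
have [_ [yj_ge _]] := yF; apply: leq_trans (yj_ge j k jRt kQ).
by rewrite -x1 le_xy // (jdom_Rt hQR hQB).
Qed.
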